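(* Let \((Q, \preccurlyeq_Q)\) and \((L, \preccurlyeq_L)\) be posets with smallest elements \(q_0 \in Q\) and \(l_0 \in L\). The following conditions are equivalent for every mapping \(f \colon Q \to L\). (i) For every nonempty set \(X\), \(f \circ d\) is an \(L\)-pseudoultrametric whenever \(d\colon X^2\to Q\) is a \(Q\)-pseudoultrametric. (ii) For every nonempty set \(X\), \(f \circ d\) is an \(L\)-pseudoultrametric whenever \(d\colon X^2\to Q\) is a \(Q\)-ultrametric. (iii) \(f\) is isotone and \(f(q_0) = l_0\).
   Context: For a poset \((P,\preccurlyeq_P)\) with smallest element \(p_0\) and a nonempty set \(X\), \(d\colon X^2\to P\) is a \(P\)-pseudoultrametric if \(d\) is symmetric, \(d(x,x)=p_0\) for all \(x\), and for every triple \(\langle x_1,x_2,x_3\rangle\) in \(X\) there is a permutation \((i_1,i_2,i_3)\) of \((1,2,3)\) with \(d(x_{i_1},x_{i_3})\preccurlyeq_P d(x_{i_1},x_{i_2})\) and \(d(x_{i_1},x_{i_2})=d(x_{i_2},x_{i_3})\); it is a \(P\)-ultrametric if moreover \(d(x,y)=p_0\) iff \(x=y\). A map \(f\colon Q\to L\) is isotone if \(q_1\preccurlyeq_Q q_2\) implies \(f(q_1)\preccurlyeq_L f(q_2)\). *)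

From mathcomp Require Import all_boot all_order.
Set Implicit Arguments. Unset Strict Implicit. Unset Printing Implicit Defensive.
Import Order.Theory.
Local Open Scope order_scope.

Definition tri_cond {dP} {P : porderType dP} {X : Type} (d : X -> X -> P)
  (a b c : X) : Prop := d a c <= d a b /\ d a b = d b c.

(* P-pseudoultrametric, where p0 is (intended to be) the smallest element of P. *)
Definition pseudoultrametric {dP} {P : porderType dP} (p0 : P) {X : Type}
  (d : X -> X -> P) : Prop :=
  (forall x y, d x y = d y x) /\
  (forall x, d x x = p0) /\
  (forall x1 x2 x3 : X,
     tri_cond d x1 x2 x3 \/ tri_cond d x1 x3 x2 \/
     tri_cond d x2 x1 x3 \/ tri_cond d x2 x3 x1 \/
     tri_cond d x3 x1 x2 \/ tri_cond d x3 x2 x1).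

Definition ultrametric {dP} {P : porderType dP} (p0 : P) {X : Type}
  (d : X -> X -> P) : Prop :=
  pseudoultrametric p0 d /\ (forall x y, d x y = p0 <-> x = y).

Definition isotone {dQ dL} {Q : porderType dQ} {L : porderType dL}
  (f : Q -> L) : Prop := forall q1 q2 : Q, q1 <= q2 -> f q1 <= f q2.

(** The image of a pseudoultrametric under an isotone map fixing the bottom
    element is again a pseudoultrametric, because every triangle condition
    [d(a,c) <= d(a,b) = d(b,c)] is carried over by such a map.  Conversely,
    [f q0 = l0] is forced by the one-point space, and [f q1 <= f q2] for
    [q0 < q1 <= q2] by the three-point ultrametric space with one side [q1]
    and two sides [q2]: in any pseudoultrametric the base of an isosceles
    triangle is at most its legs. *)

From mathcomp Require Import all_boot all_order.
Import Order.Theory.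
Local Open Scope order_scope.

Lemma tri_cond_comp {dQ dL} {Q : porderType dQ} {L : porderType dL} {f : Q -> L}
    {X : Type} {d : X -> X -> Q} {a b c : X} :
  isotone f -> tri_cond d a b c -> tri_cond (fun x y => f (d x y)) a b c.
Proof. by move=> hf [hac hab]; split; [exact: hf | rewrite hab]. Qed.

Lemma pseudoultrametric_comp {dQ dL} {Q : porderType dQ} {L : porderType dL}
    (f : Q -> L) (q0 : Q) (l0 : L) (X : Type) (d : X -> X -> Q) :
  isotone f -> f q0 = l0 -> pseudoultrametric q0 d ->
  pseudoultrametric l0 (fun x y => f (d x y)).
Proof.
move=> hf fq0 [hsym [hdiag htri]]; split; [|split].
- by move=> x y; rewrite hsym.
- by move=> x; rewrite hdiag.
- move=> x1 x2 x3.
  by case: (htri x1 x2 x3) => [|[|[|[|[|]]]]] /(tri_cond_comp hf); tauto.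
Qed.

Lemma pseudoultrametric_isosceles {dP} {P : porderType dP} {p0 : P} {X : Type}
    {d : X -> X -> P} (x y z : X) :
  pseudoultrametric p0 d -> d x z = d y z -> d x y <= d x z.
Proof.
move=> [hsym [_ htri]] exz; have := htri x y z.
rewrite /tri_cond (hsym z x) (hsym z y) (hsym y x) exz.
by case=> [[_ ->]|[[]|[[_ <-]|[[]|[[_ <-]|[_ ->]]]]]].
Qed.

Lemma ultrametric_unit {dP} {P : porderType dP} (p0 : P) :
  ultrametric p0 (fun _ _ : unit => p0).
Proof. by split; [split; [|split=> // ? ? ?; left] | case=> -[]]. Qed.

Section IsoscelesSpace.

Context {dP : Order.disp_t} {P : porderType dP}.
Variables p0 p1 p2 : P.

Definition isosceles_dist (x y : option bool) : P :=
  match x, y with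
  | None, None => p0
  | Some a, Some b => if a == b then p0 else p1
  | _, _ => p2
  end.

Hypotheses (le01 : p0 <= p1) (le12 : p1 <= p2) (ne10 : p1 != p0).

Lemma isosceles_dist_ultrametric : ultrametric p0 isosceles_dist.
Proof.
have le02 := le_trans le01 le12.
have ne20 : p2 != p0.
  by apply: contraNneq ne10 => e20; rewrite eq_le le01 -e20 le12.
split; last first.
  by move=> [[]|] [[]|] /=; split=> // e; move: ne10 ne20; rewrite e eqxx.
split; first by move=> [[]|] [[]|].
split; first by move=> [[]|].
have le00 := lexx p0; have le11 := lexx p1; have le22 := lexx p2.
by move=> [[]|] [[]|] [[]|]; rewrite /tri_cond /=; intuition.
Qed.

End IsoscelesSpace.

Section ComposedUltrametrics.

Context {dQ dL : Order.disp_t} {Q : porderType dQ} {L : porderType dL}.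
Context {q0 : Q} {l0 : L} {f : Q -> L}.

Hypothesis comp_ultrametric :
  forall {X : Type}, inhabited X -> forall {d : X -> X -> Q},
    ultrametric q0 d -> pseudoultrametric l0 (fun x y => f (d x y)).

Lemma comp_ultrametric_bottom : f q0 = l0.
Proof.
have [_ [fdiag _]] := comp_ultrametric (inhabits tt) (ultrametric_unit q0).
exact: fdiag tt.
Qed.

Hypotheses (le0q : forall q : Q, q0 <= q) (le0l : forall l : L, l0 <= l).

Lemma comp_ultrametric_isotone : isotone f.
Proof.
move=> q1 q2 le12; have [->|ne10] := eqVneq q1 q0.
  by rewrite comp_ultrametric_bottom le0l.
have hd := isosceles_dist_ultrametric _ _ _ (le0q q1) le12 ne10.
exact: (pseudoultrametric_isosceles (Some true) (Some false) None
          (comp_ultrametric (inhabits None) hd)).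
Qed.

End ComposedUltrametrics.

Theorem proposition3p24 (dQ dL : Order.disp_t)
  (Q : porderType dQ) (L : porderType dL)
  (q0 : Q) (hq0 : forall q : Q, q0 <= q)
  (l0 : L) (hl0 : forall l : L, l0 <= l)
  (f : Q -> L) :
  ((forall (X : Type), inhabited X -> forall d : X -> X -> Q,
       pseudoultrametric q0 d -> pseudoultrametric l0 (fun x y => f (d x y)))
   <->
   (forall (X : Type), inhabited X -> forall d : X -> X -> Q,
       ultrametric q0 d -> pseudoultrametric l0 (fun x y => f (d x y))))
  /\
  ((forall (X : Type), inhabited X -> forall d : X -> X -> Q,
       ultrametric q0 d -> pseudoultrametric l0 (fun x y => f (d x y)))
   <->
   (isotone f /\ f q0 = l0)).
Proof.
have iii_of_ii := fun hii => conj (comp_ultrametric_isotone hii hq0 hl0)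
                                  (comp_ultrametric_bottom hii).
have i_of_iii : isotone f /\ f q0 = l0 -> forall (X : Type), inhabited X ->
    forall d : X -> X -> Q, pseudoultrametric q0 d ->
    pseudoultrametric l0 (fun x y => f (d x y)).
  by move=> [hf fq0] X _ d; apply: pseudoultrametric_comp.
split; split.
- by move=> hi X hX d [hd _]; exact: hi.
- by move=> hii; apply/i_of_iii/iii_of_ii.
- exact: iii_of_ii.
- by move=> hiii X hX d [hd _]; exact: i_of_iii.
Qed.
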